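(* For $n\ge 0$ let $P^{(2)}_n(z_1,z_2)=\sum_{\pi} z_1^{a_1(\pi)}z_2^{a_2(\pi)}$, the sum over all multiset set-partitions $\pi$ of the multiset $\{1^2,2^2,\dots,n^2\}$ (each of $1,\dots,n$ appearing exactly twice); in particular $P^{(2)}_0=1$. Let $D_1=\partial/\partial z_1$, $D_2=\partial/\partial z_2$ and let $\mathcal{D}_2$ be the partial differential operator $$\mathcal{D}_2= z_2D_2+\tfrac12 z_1^4D_2^2+z_1^3D_1D_2+\tfrac12 z_1^2D_1^2+z_1^3D_2+z_1^2D_1+z_2 ,$$ where each term acts by first applying the indicated derivatives and then multiplying by the indicated monomial. Then for all $n\ge1$, $$P^{(2)}_n(z_1,z_2)=\mathcal{D}_2\,P^{(2)}_{n-1}(z_1,z_2).$$ Consequently the number of multiset set-partitions of $\{1^2,\dots,n^2\}$ equals $P^{(2)}_n(1,1)$.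
   Context: A multiset set-partition of a finite multiset $M$ is a finite multiset of nonempty sets (ordinary sets, no repeated elements inside a set) whose multiset union equals $M$; the same set may occur several times in the partition, and the partition is unordered. For a multiset set-partition $\pi$ and $i\ge1$, $a_i(\pi)$ denotes the number of distinct sets that occur in $\pi$ exactly $i$ times. *)

From HB Require Import structures.
From mathcomp Require Import all_boot all_order all_algebra.
Set Implicit Arguments. Unset Strict Implicit. Unset Printing Implicit Defensive.
Import GRing.Theory.
Local Open Scope ring_scope.

(* A multiset set-partition of {1^2,...,n^2} (ground set encoded as 'I_n) is
   encoded by its multiplicity function m : {set 'I_n} -> 'I_3, m S being the
   number of times the set S occurs in the partition.  Multiplicities are at
   most 2 in any such partition (each nonempty S contains some i occurring
   exactly twice), so 'I_3 loses nothing. *)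
Definition is_mspart (n : nat) (m : {ffun {set 'I_n} -> 'I_3}) : bool :=
  (nat_of_ord (m set0) == 0%N) &&
  [forall i : 'I_n, (\sum_(S : {set 'I_n} | i \in S) nat_of_ord (m S))%N == 2%N].

Definition a_k (n k : nat) (m : {ffun {set 'I_n} -> 'I_3}) : nat :=
  #|[set S : {set 'I_n} | nat_of_ord (m S) == k]|.

(* Bivariate polynomials in z1, z2 over rat: {poly {poly rat}},
   inner variable = z1, outer variable = z2. *)
Notation bipoly := {poly {poly rat}}.
Definition z1 : bipoly := ('X)%:P.
Definition z2 : bipoly := 'X.
Definition D1 (p : bipoly) : bipoly := map_poly (@deriv rat) p.
Definition D2 (p : bipoly) : bipoly := deriv p.

Definition P2 (n : nat) : bipoly :=
  \sum_(m : {ffun {set 'I_n} -> 'I_3} | is_mspart m)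
     z1 ^+ (a_k 1 m) * z2 ^+ (a_k 2 m).

Definition half : bipoly := (2%:R^-1 : rat)%:P%:P.
Definition Dop2 (p : bipoly) : bipoly :=
  z2 * D2 p + half * z1 ^+ 4 * D2 (D2 p) + z1 ^+ 3 * D1 (D2 p)
  + half * z1 ^+ 2 * D1 (D1 p) + z1 ^+ 3 * D2 p + z1 ^+ 2 * D1 p + z2 * p.

Definition eval2 (p : bipoly) (a b : rat) : rat := (p.[b%:P]).[a].

From Pilot Require Import Defs.
From HB Require Import structures.
From mathcomp Require Import all_boot all_order all_algebra.
From mathcomp Require Import ring.
Set Implicit Arguments. Unset Strict Implicit. Unset Printing Implicit Defensive.
Import GRing.Theory.
Local Open Scope ring_scope.

(* A multiset set-partition m of {1^2..(n+1)^2} is determined by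
   - its restriction m' to {1^2..n^2}, obtained by deleting the new point
     n+1 from every block (merging the sets Y and Y + {n+1}), and
   - the multiplicities b Y of the blocks Y + {n+1} containing the new point:
     b sums to 2 and b Y <= m' Y for Y nonempty (Y = set0 stands for the
     singleton block {n+1}).
   Conversely every such pair (m', b) glues back to a partition.  Since the
   weight of the glued partition is a product over Y of a factor depending
   only on (m' Y, b Y), the sum over b is the coefficient of t^2 of
     (1 + z1 t + z2 t^2) (z1 + z1 t)^{a1} (z2 + z1^2 t + z2 t^2)^{a2},
   which the formulas for the low coefficients of powers identify with
   Dop2 (z1^{a1} z2^{a2}).  Linearity of Dop2 gives the recurrence, and
   evaluating P2 n at (1, 1) counts the partitions. *)

(* The ground set 'I_n.+1 is 'I_n (embedded by lift ord_max) plus the new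
   point ord_max.  A set X of 'I_n.+1 is determined by its trace on 'I_n and
   by whether it contains the new point. *)
Definition lift_set n (Y : {set 'I_n}) : {set 'I_n.+1} := lift ord_max @: Y.
Definition lift_set_new n (Y : {set 'I_n}) : {set 'I_n.+1} := ord_max |: lift_set Y.
Definition trace n (X : {set 'I_n.+1}) : {set 'I_n} := lift ord_max @^-1: X.

Lemma mem_lift_set n (Y : {set 'I_n}) i : (lift ord_max i \in lift_set Y) = (i \in Y).
Proof. exact/mem_imset/lift_inj. Qed.

Lemma new_notin_lift_set n (Y : {set 'I_n}) : (ord_max \in lift_set Y) = false.
Proof. by apply/negbTE/imsetP => -[i _ /eqP]; rewrite (negbTE (neq_lift _ _)). Qed.

Lemma mem_lift_set_new n (Y : {set 'I_n}) i : (lift ord_max i \in lift_set_new Y) = (i \in Y).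
Proof. by rewrite in_setU1 eq_sym (negbTE (neq_lift _ _)) mem_lift_set. Qed.

Lemma new_in_lift_set_new n (Y : {set 'I_n}) : ord_max \in lift_set_new Y.
Proof. exact: setU11. Qed.

Lemma trace_lift_set n (Y : {set 'I_n}) : trace (lift_set Y) = Y.
Proof. by apply/setP => i; rewrite inE mem_lift_set. Qed.

Lemma trace_lift_set_new n (Y : {set 'I_n}) : trace (lift_set_new Y) = Y.
Proof. by apply/setP => i; rewrite inE mem_lift_set_new. Qed.

Lemma lift_set_trace n (X : {set 'I_n.+1}) :
  ord_max \notin X -> lift_set (trace X) = X.
Proof.
move=> hX; apply/setP => j; case: (unliftP ord_max j) => [i ->|->].
  by rewrite mem_lift_set inE.
by rewrite new_notin_lift_set (negbTE hX).
Qed.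

Lemma lift_set_new_trace n (X : {set 'I_n.+1}) :
  ord_max \in X -> lift_set_new (trace X) = X.
Proof.
move=> hX; apply/setP => j; case: (unliftP ord_max j) => [i ->|->].
  by rewrite mem_lift_set_new inE.
by rewrite new_in_lift_set_new hX.
Qed.

Lemma lift_set_set0 n : lift_set (set0 : {set 'I_n}) = set0.
Proof. exact: imset0. Qed.

Lemma big_subsets_succ (R : Type) (idx : R) (op : Monoid.com_law idx) n
    (F : {set 'I_n.+1} -> R) :
  \big[op/idx]_X F X =
  \big[op/idx]_(Y : {set 'I_n}) op (F (lift_set Y)) (F (lift_set_new Y)).
Proof.
rewrite (partition_big (@trace n) xpredT) //=; apply: eq_bigr => Y _.
have neq_Y : lift_set_new Y != lift_set Y.
  by apply: contraTneq (new_in_lift_set_new Y) => ->; rewrite new_notin_lift_set.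
rewrite (bigD1 (lift_set Y)) ?trace_lift_set //=.
rewrite (bigD1 (lift_set_new Y)) /= ?trace_lift_set_new ?eqxx ?neq_Y //.
rewrite big_pred0 ?Monoid.mulm1 // => X; apply/negbTE/andP => -[/andP[/eqP <- hup] hnew].
case: (boolP (ord_max \in X)) => hX.
  by rewrite lift_set_new_trace ?eqxx in hnew.
by rewrite lift_set_trace ?eqxx in hup.
Qed.

Lemma sum_subsets_mem n (i : 'I_n) (F : {set 'I_n.+1} -> nat) :
  (\sum_(X : {set 'I_n.+1} | lift ord_max i \in X) F X =
   \sum_(Y : {set 'I_n} | i \in Y) (F (lift_set Y) + F (lift_set_new Y)))%N.
Proof.
rewrite big_mkcond big_subsets_succ [RHS]big_mkcond /=.
by apply: eq_bigr => Y _; rewrite mem_lift_set mem_lift_set_new; case: (i \in Y).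
Qed.

Lemma sum_subsets_new n (F : {set 'I_n.+1} -> nat) :
  (\sum_(X : {set 'I_n.+1} | ord_max \in X) F X = \sum_(Y : {set 'I_n}) F (lift_set_new Y))%N.
Proof.
rewrite big_mkcond big_subsets_succ /=.
by apply: eq_bigr => Y _; rewrite new_in_lift_set_new new_notin_lift_set.
Qed.

Definition mfun n := {ffun {set 'I_n} -> 'I_3}.

Definition glue n (m' b : mfun n) : mfun n.+1 :=
  [ffun X : {set 'I_n.+1} => if ord_max \in X then b (trace X)
             else inord (m' (trace X) - b (trace X))].

Definition restrict n (m : mfun n.+1) : mfun n :=
  [ffun Y : {set 'I_n} => if Y == set0 then ord0 else inord (m (lift_set Y) + m (lift_set_new Y))].
Definition new_blocks n (m : mfun n.+1) : mfun n := [ffun Y : {set 'I_n} => m (lift_set_new Y)].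

(* The new point lies in exactly two blocks, and only existing blocks (or the
   empty trace, for the singleton block of the new point) can receive it. *)
Definition admissible n (m' b : mfun n) : bool :=
  (\sum_Y (b Y : nat) == 2)%N && [forall Y, (Y != set0) ==> (b Y <= m' Y)%N].

Lemma glue_lift_set n (m' b : mfun n) Y :
  glue m' b (lift_set Y) = (m' Y - b Y)%N :> nat.
Proof.
rewrite ffunE new_notin_lift_set trace_lift_set inordK //.
exact: leq_ltn_trans (leq_subr _ _) (ltn_ord _).
Qed.

Lemma glue_lift_set_new n (m' b : mfun n) Y : glue m' b (lift_set_new Y) = b Y.
Proof. by rewrite ffunE new_in_lift_set_new trace_lift_set_new. Qed.

Lemma nonempty_set n (Y : {set 'I_n}) i : i \in Y -> (Y == set0) = false.
Proof. by move=> hi; apply/negbTE/set0Pn; exists i. Qed.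

Lemma glue_mspart n (m' b : mfun n) :
  is_mspart m' -> admissible m' b -> is_mspart (glue m' b).
Proof.
case/andP=> /eqP m'0 /forallP m'_cov /andP[/eqP b_sum /forallP b_le].
apply/andP; split.
  by rewrite -lift_set_set0 glue_lift_set m'0.
apply/forallP => j; case: (unliftP ord_max j) => [i ->|->]; apply/eqP.
  rewrite sum_subsets_mem; apply: eq_trans (eqP (m'_cov i)); apply: eq_bigr => Y hY.
  rewrite glue_lift_set glue_lift_set_new subnK //.
  by have := b_le Y; rewrite (nonempty_set hY).
by rewrite sum_subsets_new; apply: eq_trans b_sum; apply: eq_bigr => Y _; rewrite glue_lift_set_new.
Qed.

Lemma mult_pair_le2 n (m : mfun n.+1) i (Y : {set 'I_n}) :
  is_mspart m -> i \in Y -> (m (lift_set Y) + m (lift_set_new Y) <= 2)%N.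
Proof.
case/andP=> _ /forallP /(_ (lift ord_max i)) /eqP; rewrite sum_subsets_mem => cov hY.
by apply: leq_trans (eq_leq cov); rewrite (bigD1 Y) //= leq_addr.
Qed.

Lemma restrict_mspart n (m : mfun n.+1) : is_mspart m -> is_mspart (restrict m).
Proof.
move=> hm; apply/andP; split; first by rewrite ffunE eqxx.
apply/forallP => i; have /andP[_ /forallP /(_ (lift ord_max i)) /eqP] := hm.
rewrite sum_subsets_mem => cov; apply/eqP; apply: eq_trans cov; apply: eq_bigr => Y hY.
by rewrite ffunE (nonempty_set hY) inordK // ltnS (mult_pair_le2 hm hY).
Qed.

Lemma new_blocks_admissible n (m : mfun n.+1) :
  is_mspart m -> admissible (restrict m) (new_blocks m).
Proof.
move=> hm; apply/andP; split.
  have /andP[_ /forallP /(_ ord_max) /eqP] := hm; rewrite sum_subsets_new => cov.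
  by apply/eqP; apply: eq_trans cov; apply: eq_bigr => Y _; rewrite ffunE.
apply/forallP => Y; apply/implyP => /set0Pn[i hi]; rewrite !ffunE (nonempty_set hi).
by rewrite inordK ?leq_addl // ltnS (mult_pair_le2 hm hi).
Qed.

Lemma glueK n (m : mfun n.+1) : is_mspart m -> glue (restrict m) (new_blocks m) = m.
Proof.
move=> hm; apply/ffunP => X; apply/val_inj => /=.
case: (boolP (ord_max \in X)) => hX.
  by rewrite -(lift_set_new_trace hX) glue_lift_set_new ffunE.
rewrite -(lift_set_trace hX) glue_lift_set !ffunE.
case: (boolP (trace X == set0)) => [/eqP->|/set0Pn[i hi]].
  by have /andP[/eqP m0 _] := hm; rewrite lift_set_set0 m0.
by rewrite inordK ?addnK // ltnS (mult_pair_le2 hm hi).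
Qed.

Lemma restrict_glue n (m' b : mfun n) :
  is_mspart m' -> admissible m' b -> restrict (glue m' b) = m'.
Proof.
move=> /andP[/eqP m'0 _] /andP[_ /forallP b_le]; apply/ffunP => Y; apply/val_inj => /=.
rewrite ffunE; case: ifP => [/eqP-> | hY]; first by rewrite m'0.
rewrite glue_lift_set glue_lift_set_new subnK ?inordK //.
by have := b_le Y; rewrite hY.
Qed.

Lemma new_blocks_glue n (m' b : mfun n) : new_blocks (glue m' b) = b.
Proof. by apply/ffunP => Y; rewrite ffunE glue_lift_set_new. Qed.

Definition sel (R : pzSemiRingType) (A B : R) (k : nat) : R :=
  if k == 1%N then A else if k == 2%N then B else 1.

Lemma prod_sel (R : comPzSemiRingType) n (m : mfun n) (A B : R) :
  \prod_X sel A B (m X) = A ^+ a_k 1 m * B ^+ a_k 2 m.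
Proof.
rewrite /a_k !cardsE -!prodr_const [X in X * _]big_mkcond [X in _ * X]big_mkcond -big_split /=.
apply: eq_bigr => X _; rewrite !unfold_in /sel.
by case: (nat_of_ord (m X)) => [|[|[|k]]]; rewrite /= ?mulr1 ?mul1r.
Qed.

Lemma P2_succ_decomp n : P2 n.+1 = \sum_(m' : mfun n | is_mspart m')
   \sum_(b : mfun n | admissible m' b) \prod_X sel z1 z2 (glue m' b X).
Proof.
rewrite pair_big_dep /= /P2.
rewrite (partition_big (fun p : mfun n * mfun n => glue p.1 p.2) (@is_mspart n.+1)) /=;
  last by move=> [m' b] /andP[]; apply: glue_mspart.
apply: eq_bigr => m hm; rewrite (big_pred1 (restrict m, new_blocks m)) /=.
  by rewrite glueK // prod_sel.
move=> [m' b] /=; apply/idP/eqP => [/andP[/andP[hm' hb] /eqP <-] | [-> ->]].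
  by rewrite restrict_glue ?new_blocks_glue.
by rewrite restrict_mspart ?new_blocks_admissible ?glueK ?eqxx.
Qed.

Lemma glue_weight n (m' b : mfun n) :
  \prod_X sel z1 z2 (glue m' b X) =
  \prod_Y (sel z1 z2 (m' Y - b Y) * sel z1 z2 (b Y)).
Proof.
rewrite (big_subsets_succ (@GRing.mul bipoly)); apply: eq_bigr => Y _.
by rewrite glue_lift_set glue_lift_set_new.
Qed.

Definition block_coef n (m' : mfun n) (Y : {set 'I_n}) (j : nat) : bipoly :=
  if (Y == set0) || (j <= m' Y)%N then sel z1 z2 (m' Y - j) * sel z1 z2 j else 0.

(* The admissibility constraint b <= m' is absorbed into the vanishing of
   block_coef, leaving only the constraint that b sums to 2. *)
Lemma sum_admissible n (m' : mfun n) :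
  \sum_(b : mfun n | admissible m' b) \prod_X sel z1 z2 (glue m' b X) =
  \sum_(b : mfun n | (\sum_Y (b Y : nat) == 2)%N) \prod_Y block_coef m' Y (b Y).
Proof.
rewrite big_mkcond [RHS]big_mkcond; apply: eq_bigr => b _.
rewrite glue_weight /admissible; case: (_ == 2)%N => //=.
case: (boolP [forall _, _]) => [/forallP b_le | ].
  apply: eq_bigr => Y _; rewrite /block_coef.
  by have := b_le Y; case: (Y == set0) => //= ->.
rewrite negb_forall => /existsP[Y]; rewrite negb_imply => /andP[hY hb].
by rewrite (bigD1 Y) //= /block_coef (negbTE hY) (negbTE hb) mul0r.
Qed.

Lemma coef_prod_sum (R : comNzRingType) (I : finType) k (F : I -> nat -> R) d :
  \sum_(b : {ffun I -> 'I_k} | (\sum_i (b i : nat) == d)%N) \prod_i F i (b i) =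
  (\prod_i \sum_(j < k) (F i j)%:P * 'X^j)`_d.
Proof.
rewrite bigA_distr_bigA /= coef_sum big_mkcond /=; apply: eq_bigr => b _.
rewrite big_split /= -rmorph_prod prodrXr coefCM coefXn eq_sym.
by case: eqP; rewrite ?mulr1 ?mulr0.
Qed.

Definition quad (R : nzRingType) (c : nat -> R) : {poly R} :=
  \sum_(j < 3) (c j)%:P * 'X^j.

Lemma coef_quad (R : nzRingType) (c : nat -> R) i :
  (quad c)`_i = if (i < 3)%N then c i else 0.
Proof.
rewrite coef_sum; under eq_bigr do rewrite coefCM coefXn.
case: ltnP => hi; last first.
  by apply: big1 => j _; rewrite gtn_eqF ?mulr0 // (leq_trans (ltn_ord j) hi).
rewrite (bigD1 (Ordinal hi)) //= eqxx mulr1 big1 ?addr0 // => j hj.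
rewrite (_ : (i == j) = false) ?mulr0 //.
by apply: contraNF hj => /eqP ij; apply/eqP/val_inj.
Qed.

Lemma eq_quad (R : nzRingType) (c d : nat -> R) :
  (forall j, (j < 3)%N -> c j = d j) -> quad c = quad d.
Proof. by move=> cd; apply: eq_bigr => j _; rewrite cd. Qed.

(* Generating polynomial of a set occurring k times in the old partition:
   j of its copies receive the new point (weight of multiplicities k - j and j). *)
Definition block (k : nat) : {poly bipoly} :=
  quad (fun j => if (j <= k)%N then sel z1 z2 (k - j) * sel z1 z2 j else 0).

(* Generating polynomial of the singleton block {new}, occurring j times. *)
Definition block_new : {poly bipoly} := quad (sel z1 z2).

Lemma block0 : block 0 = 1.
Proof.
rewrite /block /quad !big_ord_recr big_ord0 /= /sel /=.
by rewrite add0r !polyC0 !mul0r !addr0 mulr1 expr0 mulr1.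
Qed.

Lemma coef_block_new j : block_new`_j = [:: 1; z1; z2]`_j.
Proof. by rewrite coef_quad; case: j => [|[|[|j]]] //=; rewrite nth_nil. Qed.

Lemma coef_block1 j : (block 1)`_j = [:: z1; z1]`_j.
Proof.
by rewrite coef_quad /sel; case: j => [|[|[|j]]] //=; rewrite ?mulr1 ?mul1r ?nth_nil.
Qed.

Lemma coef_block2 j : (block 2)`_j = [:: z2; z1 * z1; z2]`_j.
Proof.
by rewrite coef_quad /sel; case: j => [|[|[|j]]] //=; rewrite ?mulr1 ?mul1r ?nth_nil.
Qed.

Lemma prod_blocks n (m' : mfun n) : is_mspart m' ->
  \prod_Y quad (block_coef m' Y) =
  block_new * block 1 ^+ a_k 1 m' * block 2 ^+ a_k 2 m'.
Proof.
move=> /andP[/eqP m'0 _]; rewrite -mulrA -prod_sel (bigD1 set0) //=.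
rewrite [in RHS](bigD1 set0) //= m'0 /sel /= mul1r; congr (_ * _).
  by apply: eq_quad => j _; rewrite /block_coef eqxx m'0 sub0n mul1r.
apply: eq_bigr => Y hY.
have -> : quad (block_coef m' Y) = block (m' Y).
  by apply: eq_quad => j _; rewrite /block_coef (negbTE hY).
by case: (nat_of_ord (m' Y)) (ltn_ord (m' Y)) => [|[|[|k]]] //= _; rewrite block0.
Qed.

Section LowCoefficients.
Variable R : comNzRingType.
Implicit Types p q : {poly R}.

Lemma coefM0 p q : (p * q)`_0 = p`_0 * q`_0.
Proof. by rewrite coefM big_ord_recl big_ord0 addr0. Qed.

Lemma coefM1 p q : (p * q)`_1 = p`_0 * q`_1 + p`_1 * q`_0.
Proof. by rewrite coefM !big_ord_recl big_ord0 addr0. Qed.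

Lemma coefM2 p q : (p * q)`_2 = p`_0 * q`_2 + p`_1 * q`_1 + p`_2 * q`_0.
Proof. by rewrite coefM !big_ord_recl big_ord0 addr0 addrA. Qed.

Lemma coefX0 p k : (p ^+ k)`_0 = p`_0 ^+ k.
Proof. by elim: k => [|k IHk]; rewrite ?coefC // !exprS coefM0 IHk. Qed.

Lemma coefX1 p k : (p ^+ k)`_1 = k%:R * p`_0 ^+ k.-1 * p`_1.
Proof.
elim: k => [|k IHk]; first by rewrite coefC !mul0r.
by rewrite exprS coefM1 IHk coefX0; case: k {IHk} => [|k] /=; rewrite ?exprS; ring.
Qed.

Lemma coefX2 p k : (p ^+ k)`_2 =
  k%:R * p`_0 ^+ k.-1 * p`_2 + 'C(k, 2)%:R * p`_0 ^+ k.-2 * p`_1 ^+ 2.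
Proof.
elim: k => [|k IHk]; first by rewrite coefC !mul0r addr0.
rewrite exprS coefM2 IHk coefX0 coefX1.
case: k {IHk} => [|[|k]] /=; rewrite ?exprS ?expr0.
- by rewrite !bin_small //; ring.
- by rewrite binn bin_small //; ring.
- by rewrite [in RHS]binS bin1 natrD; ring.
Qed.

End LowCoefficients.

Lemma D1D (p q : bipoly) : D1 (p + q) = D1 p + D1 q.
Proof. exact: raddfD. Qed.

Lemma D2D (p q : bipoly) : D2 (p + q) = D2 p + D2 q.
Proof. exact: derivD. Qed.

Lemma D1Mn (p : bipoly) k : D1 (p *+ k) = D1 p *+ k.
Proof. exact: raddfMn. Qed.

Lemma D2Mn (p : bipoly) k : D2 (p *+ k) = D2 p *+ k.
Proof. exact: derivMn. Qed.

Lemma D1_mon a b : D1 (z1 ^+ a * z2 ^+ b) = z1 ^+ a.-1 * z2 ^+ b *+ a.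
Proof.
apply/polyP => i; rewrite /D1 /z1 /z2 coef_map /= -!rmorphXn -mulrnAl -polyCMn.
by rewrite !coefCM !coefXn; case: eqP; rewrite ?mulr1 ?mulr0 ?derivXn ?linear0.
Qed.

Lemma D2_mon a b : D2 (z1 ^+ a * z2 ^+ b) = z1 ^+ a * z2 ^+ b.-1 *+ b.
Proof. by rewrite /D2 /z1 -rmorphXn deriv_mulC derivXn mulrnAr. Qed.

Lemma Dop2_mon a b : Dop2 (z1 ^+ a * z2 ^+ b) =
  z2 * (z1 ^+ a * z2 ^+ b.-1 *+ b)
  + Defs.half * z1 ^+ 4 * (z1 ^+ a * z2 ^+ b.-1.-1 *+ b.-1 *+ b)
  + z1 ^+ 3 * (z1 ^+ a.-1 * z2 ^+ b.-1 *+ a *+ b)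
  + Defs.half * z1 ^+ 2 * (z1 ^+ a.-1.-1 * z2 ^+ b *+ a.-1 *+ a)
  + z1 ^+ 3 * (z1 ^+ a * z2 ^+ b.-1 *+ b)
  + z1 ^+ 2 * (z1 ^+ a.-1 * z2 ^+ b *+ a)
  + z2 * (z1 ^+ a * z2 ^+ b).
Proof. by rewrite /Dop2 !(D1_mon, D2_mon, D1Mn, D2Mn). Qed.

(* The factor 1/2 of the operator produces the binomial coefficients 'C(k, 2). *)
Lemma bin2_half k : ('C(k, 2)%:R : bipoly) = Defs.half * (k%:R * k.-1%:R).
Proof.
have half2 : Defs.half * 2%:R = 1 by rewrite /Defs.half -!polyCMn -!polyCM mulVf.
have bin2_nat : (2 * 'C(k, 2) = k * k.-1)%N by rewrite mul_bin_left bin1 mulnC subn1.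
by rewrite -natrM -bin2_nat natrM mulrA half2 mul1r.
Qed.

Lemma coef2_blocks (p q r : {poly bipoly}) a b :
  (forall j, p`_j = [:: 1; z1; z2]`_j) ->
  (forall j, q`_j = [:: z1; z1]`_j) ->
  (forall j, r`_j = [:: z2; z1 * z1; z2]`_j) ->
  (p * q ^+ a * r ^+ b)`_2 = Dop2 (z1 ^+ a * z2 ^+ b).
Proof.
move=> coef_p coef_q coef_r.
rewrite -mulrA coefM2 coefM0 coefM1 coefM2 !coefX0 !coefX1 !coefX2.
rewrite !coef_p !coef_q !coef_r /= Dop2_mon !bin2_half.
by case: a => [|[|a]]; case: b => [|[|b]]; rewrite /= ?exprS ?expr0; ring.
Qed.

Lemma sum_extensions n (m' : mfun n) : is_mspart m' ->
  \sum_(b : mfun n | admissible m' b) \prod_X sel z1 z2 (glue m' b X) =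
  Dop2 (z1 ^+ a_k 1 m' * z2 ^+ a_k 2 m').
Proof.
move=> hm'; rewrite sum_admissible coef_prod_sum.
by rewrite (prod_blocks hm') (coef2_blocks _ _ coef_block_new coef_block1 coef_block2).
Qed.

Lemma Dop2D (p q : bipoly) : Dop2 (p + q) = Dop2 p + Dop2 q.
Proof. by rewrite /Dop2 !(D1D, D2D); ring. Qed.

Lemma Dop20 : Dop2 0 = 0.
Proof.
have D10 : D1 0 = 0 by exact: raddf0.
have D20 : D2 0 = 0 by exact: deriv0.
by rewrite /Dop2 !(D10, D20); ring.
Qed.

Lemma P2_succ n : P2 n.+1 = Dop2 (P2 n).
Proof.
rewrite P2_succ_decomp /P2 (big_morph Dop2 Dop2D Dop20).
by apply: eq_bigr => m' hm'; rewrite sum_extensions.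
Qed.

(* Every partition has weight 1 at z1 = z2 = 1. *)
Lemma P2_count n :
  (#|[set m : {ffun {set 'I_n} -> 'I_3} | is_mspart m]|%:R : rat) = eval2 (P2 n) 1 1.
Proof.
rewrite /eval2 /P2 !horner_sum cardsE -sumr_const; apply: eq_bigr => m _.
by rewrite hornerM !hornerXn /z1 -rmorphXn hornerC !expr1n mulr1 hornerXn expr1n.
Qed.

Theorem mainTheorem1 (n : nat) (hn : (1 <= n)%N) :
  P2 n = Dop2 (P2 n.-1) /\
  (#|[set m : {ffun {set 'I_n} -> 'I_3} | is_mspart m]|%:R : rat) = eval2 (P2 n) 1 1.
Proof. by case: n hn => [//|n] _; split; [exact: P2_succ | exact: P2_count]. Qed.
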